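(* Let $p\in[0,1)$, let $f:2^{\mathcal{N}}\to\mathbb{R}_{\ge0}$ be a non-negative submodular function with multilinear extension $F$, and let $\mathcal{P}\subseteq[0,1]^{\mathcal{N}}$ be a downward-closed solvable polytope such that $z_i\le p$ for all $\bm{z}\in\mathcal{P}$ and $i\in\mathcal{N}$. Let $\bm{x}(\cdot)$ be the trajectory of the Measured Continuous Greedy algorithm on $F$ and $\mathcal{P}$. Then for every $b\in[0,1]$, $\bm{x}(b)\in b\cdot\mathcal{P}$ and \[F(\bm{x}(b))\ge\begin{cases} b\,e^{-b}\,\max_{\bm{z}\in\mathcal{P}} f^+(\bm{z}), & 0\le b\le \ln\frac{1}{1-p},\\[2pt] \big(1-p-e^{-b}(1+\ln(1-p))\big)\max_{\bm{z}\in\mathcal{P}} f^+(\bm{z}), & \ln\frac{1}{1-p}\le b\le 1.\end{cases}\]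
   Context: Submodular: $f(A)+f(B)\ge f(A\cup B)+f(A\cap B)$; non-negative: $f\ge0$, $f(\emptyset)=0$. Multilinear extension $F(\bm{x})=\sum_{S} f(S)\prod_{i\in S}x_i\prod_{i\notin S}(1-x_i)$; concave closure $f^+(\bm{x})=\max\{\sum_S a_Sf(S): a_S\ge0,\sum_Sa_S=1,\sum_Sa_S\mathbf{1}_S=\bm{x}\}$. A polytope $\mathcal{P}\subseteq[0,1]^{\mathcal{N}}$ is downward-closed if $\bm{0}\le\bm{y}\le\bm{z}\in\mathcal{P}$ implies $\bm{y}\in\mathcal{P}$, and solvable if linear functions can be maximized over it in polynomial time. The Measured Continuous Greedy algorithm (continuous-time version) produces $\bm{x}:[0,1]\to[0,1]^{\mathcal{N}}$ with $\bm{x}(0)=\bm{0}$ and $\frac{d}{dt}\bm{x}(t)=\bm{v}(t)\circ(\bm{1}-\bm{x}(t))$, where $\circ$ is the coordinatewise product and $\bm{v}(t)\in\arg\max_{\bm{v}\in\mathcal{P}}\langle \bm{v}\circ(\bm{1}-\bm{x}(t)),\nabla F(\bm{x}(t))\rangle$; its output at time $b$ is $\bm{x}(b)$. $b\cdot\mathcal{P}=\{b\bm{z}:\bm{z}\in\mathcal{P}\}$. *)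

From HB Require Import structures.
From mathcomp Require Import all_boot all_order all_algebra.
From mathcomp Require Import all_classical all_reals all_analysis.
Set Implicit Arguments. Unset Strict Implicit. Unset Printing Implicit Defensive.
Import Order.TTheory GRing.Theory Num.Theory.
Import numFieldNormedType.Exports.
Local Open Scope classical_set_scope.
Local Open Scope ring_scope.

Section Defs.
Variables (R : realType) (T : finType).

Definition nonneg_setfun (f : {set T} -> R) : Prop :=
  (forall S, 0 <= f S) /\ f finset.set0 = 0.

Definition submodular (f : {set T} -> R) : Prop :=
  forall A B : {set T}, f A + f B >= f (A :|: B) + f (A :&: B).

Definition multilinear_ext (f : {set T} -> R) (x : T -> R) : R :=
  \sum_(S : {set T}) f S * (\prod_(i in S) x i) * (\prod_(i in ~: S) (1 - x i)).

(* concave closure f^+(x): the maximum over distributions on sets with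
   marginals x of the expected value of f (written as a supremum; the
   feasible set is compact, so this is the max when it is nonempty) *)
Definition concave_closure (f : {set T} -> R) (x : T -> R) : R :=
  sup [set y : R | exists a : {set T} -> R,
         [/\ forall S, 0 <= a S,
             \sum_(S : {set T}) a S = 1,
             (forall i, \sum_(S : {set T}) a S * (i \in S)%:R = x i) &
             y = \sum_(S : {set T}) a S * f S]].

Definition upd (x : T -> R) (i : T) (s : R) : T -> R :=
  fun j => if j == i then s else x j.

Definition gradF (f : {set T} -> R) (x : T -> R) (i : T) : R :=
  derive1 (fun s => multilinear_ext f (upd x i s)) (x i).

Definition polytope (P : set (T -> R)) : Prop :=
  exists (cs : seq ((T -> R) * R)),
    P = [set z | forall c, c \in cs -> \sum_i c.1 i * z i <= c.2].

Definition in_unit_cube (P : set (T -> R)) : Prop :=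
  forall z, P z -> forall i, 0 <= z i <= 1.

Definition downward_closed (P : set (T -> R)) : Prop :=
  forall y z : T -> R, (forall i, 0 <= y i <= z i) -> P z -> P y.

Definition scale_set (b : R) (P : set (T -> R)) : set (T -> R) :=
  [set w | exists2 z, P z & w = (fun i => b * z i)].

Definition mcg_objective (f : {set T} -> R) (x v : T -> R) : R :=
  \sum_i v i * (1 - x i) * gradF f x i.

Definition MCG_trajectory (f : {set T} -> R) (P : set (T -> R))
    (x v : R -> T -> R) : Prop :=
  [/\ x 0 = (fun _ => 0),
      (forall i, {within `[0, 1], continuous (fun s => x s i)}),
      (forall t : R, 0 < t < 1 -> P (v t) /\
          forall w, P w -> mcg_objective f (x t) w <= mcg_objective f (x t) (v t)) &
      (forall t : R, 0 < t < 1 -> forall i,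
          is_derive t (1:R) (fun s : R => x s i) (v t i * (1 - x t i)))].

End Defs.

(* The multilinear extension F is affine in each coordinate.  Along the
   trajectory, (1 - x_i)' = - v_i (1 - x_i) with 0 <= v_i <= p, hence
   e^-t <= 1 - x_i(t) and 1 - p t <= 1 - x_i(t); and x(b) is the integral over
   [0, b] of directions v o (1 - x) lying in the downward-closed P, so it
   satisfies every constraint of b P.
   For z in P, a distribution a on sets with marginals z and x <= 1 - c,
   submodularity gives <z o (1 - x), grad F(x)> >= c E_a[f] - F(x).  The greedy
   choice of v turns this into F' >= e^-t E_a[f] - F, and into
   F' >= (1 - p) E_a[f] - F since x <= p; hence e^t F - t E_a[f] and
   e^t F - (1 - p) e^t E_a[f] are nondecreasing, which yields the two bounds
   (the second phase starting at e^t = 1 / (1 - p)).  Taking the supremum over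
   a gives f^+(z). *)

From HB Require Import structures.
From mathcomp Require Import all_boot all_order all_algebra.
From mathcomp Require Import all_classical all_reals all_analysis.
From mathcomp Require Import ring lra.
Import Order.TTheory GRing.Theory Num.Theory.
Import numFieldNormedType.Exports.
Local Open Scope classical_set_scope.
Local Open Scope ring_scope.
Set Implicit Arguments. Unset Strict Implicit. Unset Printing Implicit Defensive.

Section BigDerive.
Variable R : realType.

Lemma is_derive_sum_seq (I : Type) (r : seq I) (h : I -> R -> R) (dh : I -> R) (t : R) :
  (forall i, is_derive t 1 (h i) (dh i)) ->
  is_derive t 1 (fun u => \sum_(i <- r) h i u) (\sum_(i <- r) dh i).
Proof.
move=> h_dh; elim: r => [|a r IH].
  have -> : (fun u => \sum_(i <- [::]) h i u) = cst 0.
    by apply/funext => u; rewrite big_nil.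
  rewrite big_nil; exact: is_derive_cst.
have -> : (fun u => \sum_(i <- a :: r) h i u) = h a + (fun u => \sum_(i <- r) h i u).
  by apply/funext => u; rewrite big_cons.
rewrite big_cons; exact: is_deriveD.
Qed.

Lemma is_derive_prod_seq (I : eqType) (r : seq I) (g : I -> R -> R) (dg : I -> R) (t : R) :
  uniq r -> (forall i, is_derive t 1 (g i) (dg i)) ->
  is_derive t 1 (fun u => \prod_(i <- r) g i u)
    (\sum_(i <- r) dg i * \prod_(j <- r | j != i) g j t).
Proof.
move=> + g_dg; elim: r => [_|a r IH /= /andP[ar ur]].
  have -> : (fun u => \prod_(i <- [::]) g i u) = cst 1.
    by apply/funext => u; rewrite big_nil.
  rewrite big_nil; exact: is_derive_cst.
have -> : (fun u => \prod_(i <- a :: r) g i u) = g a * (fun u => \prod_(i <- r) g i u).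
  by apply/funext => u; rewrite big_cons.
apply: is_derive_eq; first exact: (is_deriveM (g_dg a) (IH ur)).
have a_neq j : j \in r -> (a != j) = true.
  by move=> jr; apply/negP => /eqP aj; move: ar; rewrite aj jr.
rewrite big_cons /= big_cons eqxx /=.
have -> : \prod_(j <- r | j != a) g j t = \prod_(j <- r) g j t.
  rewrite big_seq_cond [RHS]big_seq; apply: eq_bigl => j.
  by case: (boolP (j \in r)) => // /a_neq; rewrite eq_sym => ->.
have -> : \sum_(i <- r) dg i * \prod_(j <- a :: r | j != i) g j t =
    g a t * \sum_(i <- r) dg i * \prod_(j <- r | j != i) g j t.
  rewrite mulr_sumr big_seq [RHS]big_seq; apply: eq_bigr => i ir.
  by rewrite big_cons a_neq // mulrCA.
by rewrite addrC; congr (_ + _); exact: mulrC.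
Qed.

Lemma is_derive_mul (g h : R -> R) (t dg dh : R) :
  is_derive t 1 g dg -> is_derive t 1 h dh ->
  is_derive t 1 (fun s => g s * h s) (g t * dh + h t * dg).
Proof. exact: is_deriveM. Qed.

Lemma is_derive_onem (g : R -> R) (t dg : R) :
  is_derive t 1 g dg -> is_derive t 1 (fun u => 1 - g u) (- dg).
Proof.
by move=> g_dg; have := is_deriveB (is_derive_cst (1 : R) t 1) g_dg; rewrite sub0r.
Qed.

End BigDerive.

Section MultilinearExtension.
Variables (R : realType) (T : finType).
Implicit Types (y : T -> R) (h : {set T} -> R) (A B S : {set T}) (i k : T).

(* [pr_set y S] is the probability that the random set containing each [k]
   independently with probability [y k] equals [S]. *)
Definition pr_mem y S k : R := if k \in S then y k else 1 - y k.

Definition pr_set y S : R := \prod_k pr_mem y S k.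

Definition pr_set_but y i S : R := \prod_(k | k != i) pr_mem y S k.

Lemma multilinear_extE h y : multilinear_ext h y = \sum_S pr_set y S * h S.
Proof.
apply: eq_bigr => S _; rewrite [RHS]mulrC -mulrA; congr (h S * _).
rewrite /pr_set [RHS](bigID (mem S)) /=; congr (_ * _).
  by apply: eq_bigr => k kS; rewrite /pr_mem kS.
apply: eq_big => k; rewrite finset.in_setC // => /negbTE kS.
by rewrite /pr_mem kS.
Qed.

Lemma pr_set_ge0 y S : (forall k, 0 <= y k <= 1) -> 0 <= pr_set y S.
Proof.
by move=> y01; apply: prodr_ge0 => k _; rewrite /pr_mem; case: ifP; have := y01 k; lra.
Qed.

Lemma sum_pr_set y : \sum_S pr_set y S = 1.
Proof.
rewrite /pr_set /pr_mem -(@bigA_distr R 0 1 *%R +%R T y (fun k => 1 - y k)).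
by apply: big1 => k _ /=; rewrite subrKC.
Qed.

Lemma multilinear_ext_cst y c : multilinear_ext (fun _ => c) y = c.
Proof. by rewrite multilinear_extE -mulr_suml sum_pr_set mul1r. Qed.

Lemma multilinear_ext0 h : multilinear_ext h (fun _ => 0) = h finset.set0.
Proof.
rewrite multilinear_extE (bigD1 finset.set0) //= big1 ?addr0.
  by rewrite /pr_set big1 ?mul1r // => k _; rewrite /pr_mem inE subr0.
move=> S /finset.set0Pn[k kS].
by rewrite /pr_set (bigD1 k) //= /pr_mem kS !mul0r.
Qed.

Lemma ler_multilinear_ext h1 h2 y : (forall k, 0 <= y k <= 1) ->
  (forall S, h1 S <= h2 S) -> multilinear_ext h1 y <= multilinear_ext h2 y.
Proof.
move=> y01 h12; rewrite !multilinear_extE; apply: ler_sum => S _.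
by apply: ler_wpM2l; [exact: pr_set_ge0 | exact: h12].
Qed.

Lemma multilinear_ext_ge0 h y : (forall k, 0 <= y k <= 1) ->
  (forall S, 0 <= h S) -> 0 <= multilinear_ext h y.
Proof.
by move=> y01 h_ge0; rewrite -(multilinear_ext_cst y 0); apply: ler_multilinear_ext.
Qed.

Lemma multilinear_extD h1 h2 y : multilinear_ext (fun S => h1 S + h2 S) y =
  multilinear_ext h1 y + multilinear_ext h2 y.
Proof. by rewrite !multilinear_extE -big_split; apply: eq_bigr => S _; rewrite mulrDr. Qed.

Lemma multilinear_extZ c h y :
  multilinear_ext (fun S => c * h S) y = c * multilinear_ext h y.
Proof. by rewrite !multilinear_extE mulr_sumr; apply: eq_bigr => S _; rewrite mulrCA. Qed.

Lemma multilinear_extN h y :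
  multilinear_ext (fun S => - h S) y = - multilinear_ext h y.
Proof.
rewrite -mulN1r -multilinear_extZ.
by congr multilinear_ext; apply/funext => S; rewrite mulN1r.
Qed.

Lemma multilinear_extB h1 h2 y : multilinear_ext (fun S => h1 S - h2 S) y =
  multilinear_ext h1 y - multilinear_ext h2 y.
Proof. by rewrite multilinear_extD multilinear_extN. Qed.

Lemma multilinear_ext_sum (I : finType) (H : I -> {set T} -> R) y :
  multilinear_ext (fun S => \sum_j H j S) y = \sum_j multilinear_ext (H j) y.
Proof.
rewrite multilinear_extE; under eq_bigr do rewrite mulr_sumr.
by rewrite exchange_big; apply: eq_bigr => j _; rewrite multilinear_extE.
Qed.

Lemma pr_set_split y i S : pr_set y S = pr_mem y S i * pr_set_but y i S.
Proof. exact: bigD1. Qed.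

Lemma pr_mem_upd y i s S : pr_mem (upd y i s) S i = if i \in S then s else 1 - s.
Proof. by rewrite /pr_mem /upd eqxx. Qed.

Lemma pr_set_but_upd y i s S : pr_set_but (upd y i s) i S = pr_set_but y i S.
Proof. by apply: eq_bigr => k /negbTE ki; rewrite /pr_mem /upd ki. Qed.

Lemma pr_set_but_setU1 y i A : pr_set_but y i (i |: A) = pr_set_but y i A.
Proof. by apply: eq_bigr => k /negbTE ki; rewrite /pr_mem !inE ki. Qed.

Lemma sum_setU1 i (F : {set T} -> R) :
  \sum_(A : {set T} | i \notin A) F (i |: A) = \sum_(B : {set T} | i \in B) F B.
Proof.
rewrite [RHS](reindex_onto (fun A => i |: A) (fun B => B :\ i)) /=; last first.
  by move=> B iB; rewrite finset.setD1K.
apply: eq_bigl => A; rewrite finset.setU11 /=.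
have [iA|iA] /= := boolP (i \in A); last by rewrite setU1K ?eqxx.
by case: eqP => // defA; move: iA; rewrite -defA finset.setD11.
Qed.

Lemma setU1_id i A : i \in A -> i |: A = A.
Proof. by move=> iA; apply/finset.setUidPr; rewrite finset.sub1set. Qed.

Lemma setD1_id i A : i \notin A -> A :\ i = A.
Proof. by move=> iA; apply/finset.setDidPl; rewrite disjoint_sym finset.disjoints1. Qed.

Lemma multilinear_ext_upd1 h y i :
  multilinear_ext h (upd y i 1) = multilinear_ext (fun A => h (i |: A)) y.
Proof.
rewrite !multilinear_extE.
transitivity (\sum_(B : {set T} | i \in B) pr_set_but y i B * h B).
  rewrite [LHS](bigID (fun B => i \in B)) /= [X in _ + X]big1 ?addr0 => [|B /negbTE iB].
    by apply: eq_bigr => B iB; rewrite (pr_set_split _ i) pr_mem_upd iB pr_set_but_upd mul1r.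
  by rewrite (pr_set_split _ i) pr_mem_upd iB pr_set_but_upd subrr !mul0r.
have in_i : \sum_(B : {set T} | i \in B) pr_set y B * h (i |: B) =
    \sum_(B : {set T} | i \in B) y i * (pr_set_but y i B * h B).
  by apply: eq_bigr => B iB; rewrite (pr_set_split _ i) /pr_mem iB setU1_id // mulrA.
have notin_i : \sum_(B : {set T} | i \notin B) pr_set y B * h (i |: B) =
    \sum_(B : {set T} | i \in B) (1 - y i) * (pr_set_but y i B * h B).
  rewrite -sum_setU1; apply: eq_bigr => A iA.
  by rewrite (pr_set_split _ i) /pr_mem (negbTE iA) pr_set_but_setU1 mulrA.
rewrite [RHS](bigID (fun B => i \in B)) /= in_i notin_i -big_split /=.
by apply: eq_bigr => B _; rewrite -mulrDl subrKC mul1r.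
Qed.

Lemma multilinear_ext_upd0 h y i :
  multilinear_ext h (upd y i 0) = multilinear_ext (fun A => h (A :\ i)) y.
Proof.
rewrite !multilinear_extE.
transitivity (\sum_(B : {set T} | i \notin B) pr_set_but y i B * h B).
  rewrite [LHS](bigID (fun B => i \in B)) /= big1 ?add0r => [|B iB].
    apply: eq_bigr => B /negbTE iB.
    by rewrite (pr_set_split _ i) pr_mem_upd iB pr_set_but_upd subr0 mul1r.
  by rewrite (pr_set_split _ i) pr_mem_upd iB pr_set_but_upd !mul0r.
have notin_i : \sum_(B : {set T} | i \notin B) pr_set y B * h (B :\ i) =
    \sum_(B : {set T} | i \notin B) (1 - y i) * (pr_set_but y i B * h B).
  by apply: eq_bigr => B iB; rewrite (pr_set_split _ i) /pr_mem (negbTE iB) setD1_id // mulrA.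
have in_i : \sum_(B : {set T} | i \in B) pr_set y B * h (B :\ i) =
    \sum_(B : {set T} | i \notin B) y i * (pr_set_but y i B * h B).
  rewrite -sum_setU1; apply: eq_bigr => A iA.
  by rewrite (pr_set_split _ i) /pr_mem finset.setU11 pr_set_but_setU1 setU1K // mulrA.
rewrite [RHS](bigID (fun B => i \in B)) /= in_i notin_i -big_split /=.
by apply: eq_bigr => B _; rewrite -mulrDl subrKC mul1r.
Qed.

Lemma multilinear_ext_affine h y i : multilinear_ext h y =
  y i * multilinear_ext h (upd y i 1) + (1 - y i) * multilinear_ext h (upd y i 0).
Proof.
rewrite !multilinear_extE !mulr_sumr -big_split; apply: eq_bigr => S _ /=.
by rewrite !(pr_set_split _ i) !pr_mem_upd !pr_set_but_upd /pr_mem; case: (i \in S); ring.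
Qed.

Definition pdiff h y i : R :=
  multilinear_ext h (upd y i 1) - multilinear_ext h (upd y i 0).

Lemma pdiffE h y i :
  pdiff h y i = \sum_(S : {set T}) (if i \in S then 1 else -1) * pr_set_but y i S * h S.
Proof.
rewrite /pdiff !multilinear_extE -sumrB; apply: eq_bigr => S _.
by rewrite !(pr_set_split _ i) !pr_mem_upd !pr_set_but_upd; case: (i \in S); ring.
Qed.

Lemma is_derive_multilinear_ext h (z : R -> T -> R) (dz : T -> R) (t : R) :
  (forall k, is_derive t 1 (fun u => z u k) (dz k)) ->
  is_derive t 1 (fun u => multilinear_ext h (z u)) (\sum_k dz k * pdiff h (z t) k).
Proof.
move=> z_dz; have -> : (fun u => multilinear_ext h (z u)) =
    (fun u => \sum_S pr_set (z u) S * h S).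
  by apply/funext => u; rewrite multilinear_extE.
have pr_set_dz S : is_derive t 1 (fun u => pr_set (z u) S)
    (\sum_k (if k \in S then dz k else - dz k) * pr_set_but (z t) k S).
  apply: (@is_derive_prod_seq R _ _ (fun k u => pr_mem (z u) S k)).
    exact: index_enum_uniq.
  by move=> k; rewrite /pr_mem; case: (k \in S); [exact: z_dz | exact: is_derive_onem].
apply: is_derive_eq.
  by apply: (@is_derive_sum_seq R _ _ (fun S u => pr_set (z u) S * h S)) => S; exact: is_deriveM.
under [RHS]eq_bigr do rewrite pdiffE mulr_sumr.
rewrite exchange_big /=; apply: eq_bigr => S _.
rewrite scaler0 add0r scaler_sumr; apply: eq_bigr => k _ /=.
by rewrite /GRing.scale /=; case: (k \in S); ring.
Qed.

Lemma gradFE h y i : gradF h y i = pdiff h y i.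
Proof.
rewrite /gradF derive1E; apply: derive_val.
apply: is_derive_eq.
  apply: (@is_derive_multilinear_ext h (upd y i) (fun k => (k == i)%:R)).
  by move=> k; rewrite /upd; case: (k == i); [exact: is_derive_id | exact: is_derive_cst].
rewrite (bigD1 i) //= eqxx mul1r big1 ?addr0 => [|k /negbTE ->]; last by rewrite mul0r.
by congr pdiff; apply/funext => k; rewrite /upd; case: eqP => [->|].
Qed.

Lemma mul_onem_gradF h y i :
  (1 - y i) * gradF h y i = multilinear_ext (fun A => h (i |: A) - h A) y.
Proof.
rewrite gradFE /pdiff multilinear_extB -multilinear_ext_upd1.
by rewrite (multilinear_ext_affine h y i); ring.
Qed.

End MultilinearExtension.

Section Submodular.
Variables (R : realType) (T : finType).
Implicit Types (h : {set T} -> R) (y u z : T -> R) (A B S : {set T}) (i : T).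

Lemma submodular_setUl h S : submodular h -> submodular (fun A => h (S :|: A)).
Proof.
move=> h_sub A B; have := h_sub (S :|: A) (S :|: B).
by rewrite -finset.setUUr -finset.setUIr.
Qed.

Lemma submodular_gain_le h A i : submodular h -> i \notin A ->
  h (i |: A) - h A <= h [set i]%SET - h finset.set0.
Proof.
move=> h_sub iA; have := h_sub A [set i]%SET.
rewrite finset.setUC; have -> : A :&: [set i]%SET = finset.set0.
  by apply/finset.setP => k; rewrite !inE; case: eqP => [->|]; rewrite ?(negbTE iA) ?andbF.
lra.
Qed.

Lemma submodular_gain_le_sum h A S : submodular h ->
  h (A :|: S) - h A <= \sum_(i in S) (h (i |: A) - h A).
Proof.
move=> h_sub; elim: {S}#|S| {-2}S (erefl #|S|) => [|n IH] S cardS.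
  by move/eqP: cardS; rewrite cards_eq0 => /eqP->; rewrite big_set0 finset.setU0 subrr.
have [i iS] : exists i, i \in S by apply/finset.set0Pn; rewrite -card_gt0 cardS.
rewrite (big_setD1 i iS) /=.
have := IH (S :\ i); rewrite (cardsD1 i S) iS in cardS; case: cardS => /IH{}IH.
have := h_sub (i |: A) (A :|: S :\ i).
have -> : (i |: A) :|: (A :|: S :\ i) = A :|: S.
  apply/finset.setP => k; rewrite !inE; case: (eqVneq k i) => [->|] /=; rewrite ?iS ?orbT //.
  by case: (k \in A).
have -> : (i |: A) :&: (A :|: S :\ i) = A.
  apply/finset.setP => k; rewrite !inE; case: (eqVneq k i) => [->|] /=; first by rewrite orbF.
  by case: (k \in A).
lra.
Qed.

Lemma multilinear_ext_gain_le h y i : submodular h -> (forall k, 0 <= y k <= 1) ->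
  multilinear_ext (fun A => h (i |: A) - h A) (upd y i 0) <= h [set i]%SET - h finset.set0.
Proof.
move=> h_sub y01; rewrite multilinear_ext_upd0.
rewrite -(multilinear_ext_cst y (h [set i]%SET - h finset.set0)).
by apply: ler_multilinear_ext => // A; apply: submodular_gain_le; rewrite // finset.setD11.
Qed.

(* Induction on the support of [u], splitting [multilinear_ext] affinely in
   the coordinate [i]; the cross term is bounded by [multilinear_ext_gain_le]. *)
Lemma multilinear_ext_scale_ge h u l : submodular h -> 0 <= l <= 1 ->
  (forall k, 0 <= u k <= 1) ->
  (1 - l) * h finset.set0 + l * multilinear_ext h u <= multilinear_ext h (fun k => l * u k).
Proof.
move=> + l01; have : forall j, j \notin index_enum T -> u j = 0.
  by move=> j; rewrite mem_index_enum.
elim: (index_enum T) h u => [|i s IH] h u u_supp h_sub u01.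
  have -> : u = (fun _ => 0) by apply/funext => j; exact: u_supp.
  have -> : (fun _ : T => l * 0) = (fun _ => 0) by apply/funext => j; rewrite mulr0.
  rewrite multilinear_ext0; lra.
set u0 := upd u i 0.
have u0_01 k : 0 <= u0 k <= 1 by rewrite /u0 /upd; case: (k == i) => //; lra.
have u0_supp j : j \notin s -> u0 j = 0.
  by move=> js; rewrite /u0 /upd; case: eqVneq => // ji; apply: u_supp; rewrite inE negb_or ji.
have IH1 := IH _ _ u0_supp (submodular_setUl [set i]%SET h_sub) u0_01.
have IH0 := IH _ _ u0_supp h_sub u0_01.
rewrite finset.setU0 in IH1.
have gain := multilinear_ext_gain_le i h_sub u01; rewrite multilinear_extB in gain.
have Fu : multilinear_ext h u = u i * multilinear_ext (fun A => h (i |: A)) u0 +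
    (1 - u i) * multilinear_ext h u0.
  rewrite (multilinear_ext_affine _ _ i) -multilinear_ext_upd1; congr (_ * multilinear_ext h _ + _).
  by apply/funext => k; rewrite /u0 /upd; case: (k == i).
have Flu : multilinear_ext h (fun k => l * u k) =
    l * u i * multilinear_ext (fun A => h (i |: A)) (fun k => l * u0 k) +
    (1 - l * u i) * multilinear_ext h (fun k => l * u0 k).
  rewrite (multilinear_ext_affine _ _ i) -multilinear_ext_upd1.
  by congr (_ * multilinear_ext h _ + _ * multilinear_ext h _); apply/funext => k;
    rewrite /u0 /upd; case: (k == i); rewrite ?mulr0.
have ui01 := u01 i; have lui_ge0 : 0 <= l * u i by apply: mulr_ge0; lra.
have lui_le1 : 0 <= 1 - l * u i by rewrite subr_ge0 -[1]mulr1; apply: ler_pM; lra.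
have := ler_wpM2l lui_ge0 IH1; have := ler_wpM2l lui_le1 IH0.
have : 0 <= l * u i * (1 - l) by apply: mulr_ge0; lra.
rewrite Fu Flu; nra.
Qed.

Lemma multilinear_ext_ge_empty h y c : submodular h -> (forall S, 0 <= h S) ->
  0 <= c <= 1 -> (forall k, 0 <= y k <= 1 - c) -> c * h finset.set0 <= multilinear_ext h y.
Proof.
move=> h_sub h_ge0 c01 y_le.
have [c1|c_neq1] := eqVneq c 1.
  have -> : y = (fun _ => 0) by apply/funext => k; have := y_le k; rewrite c1; lra.
  by rewrite multilinear_ext0 c1 mul1r.
have c_lt1 : 0 < 1 - c by rewrite subr_gt0 lt_neqAle c_neq1; case/andP: c01.
pose u k := y k / (1 - c).
have u01 k : 0 <= u k <= 1.
  by have /andP[y_ge0 y_le1] := y_le k; rewrite /u divr_ge0 ?(ltW c_lt1) //= ler_pdivrMr // mul1r.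
have -> : y = (fun k => (1 - c) * u k).
  by apply/funext => k; rewrite /u mulrC divfK // gt_eqF.
have l01 : 0 <= 1 - c <= 1 by case/andP: c01 => ? ?; apply/andP; split; lra.
have := @multilinear_ext_scale_ge h u (1 - c) h_sub l01 u01.
have : 0 <= (1 - c) * multilinear_ext h u.
  by apply: mulr_ge0; [exact: ltW | exact: multilinear_ext_ge0].
have -> : 1 - (1 - c) = c by ring.
lra.
Qed.

Definition marginal_dist z (a : {set T} -> R) : Prop :=
  [/\ forall S, 0 <= a S, \sum_S a S = 1 & forall i, \sum_S a S * (i \in S)%:R = z i].

(* For [S] in the support of [a], [x \/ 1_S] has value at least [c * f S]
   because [x <= 1 - c], and by submodularity its gain over [x] is at most the
   sum of the marginal gains of the elements of [S]. *)
Lemma mcg_objective_ge f y z a c : submodular f -> (forall S, 0 <= f S) ->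
  0 <= c <= 1 -> (forall k, 0 <= y k <= 1 - c) -> marginal_dist z a ->
  c * (\sum_S a S * f S) - multilinear_ext f y <= mcg_objective f y z.
Proof.
move=> f_sub f_ge0 c01 y_le [a_ge0 a_sum1 a_marg].
have y01 k : 0 <= y k <= 1 by case/andP: c01 (y_le k) => ? ? /andP[? ?]; apply/andP; split; lra.
have -> : mcg_objective f y z = \sum_S a S *
    multilinear_ext (fun A => \sum_i (i \in S)%:R * (f (i |: A) - f A)) y.
  rewrite /mcg_objective; under eq_bigr do rewrite -mulrA mul_onem_gradF -a_marg mulr_suml.
  rewrite exchange_big /=; apply: eq_bigr => S _.
  by rewrite multilinear_ext_sum mulr_sumr; apply: eq_bigr => i _; rewrite multilinear_extZ mulrA.
have -> : c * (\sum_S a S * f S) - multilinear_ext f y =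
    \sum_S a S * (c * f S - multilinear_ext f y).
  under [RHS]eq_bigr do rewrite mulrBr.
  rewrite sumrB -mulr_suml a_sum1 mul1r mulr_sumr; congr (_ - _).
  by apply: eq_bigr => S _; rewrite mulrCA.
apply: ler_sum => S _; apply: ler_wpM2l => //.
apply: (@le_trans _ _ (multilinear_ext (fun A => f (S :|: A) - f A) y)).
  rewrite multilinear_extB lerD2r.
  have := multilinear_ext_ge_empty (submodular_setUl S f_sub) (fun A => f_ge0 _) c01 y_le.
  by rewrite finset.setU0.
apply: ler_multilinear_ext => // A; rewrite finset.setUC.
have -> : \sum_i (i \in S)%:R * (f (i |: A) - f A) = \sum_(i in S) (f (i |: A) - f A).
  by rewrite [RHS]big_mkcond; apply: eq_bigr => i _; case: (i \in S); rewrite ?mul1r ?mul0r.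
exact: submodular_gain_le_sum.
Qed.

End Submodular.

Section RealAnalysis.
Variable R : realType.
Implicit Types (A : set R) (g h : R -> R).

Lemma within_continuousD A g h : {within A, continuous g} -> {within A, continuous h} ->
  {within A, continuous (fun s => g s + h s)}.
Proof. by move=> cg ch t; apply: cvgD; [exact: cg | exact: ch]. Qed.

Lemma within_continuousB A g h : {within A, continuous g} -> {within A, continuous h} ->
  {within A, continuous (fun s => g s - h s)}.
Proof. by move=> cg ch t; apply: cvgB; [exact: cg | exact: ch]. Qed.

Lemma within_continuousM A g h : {within A, continuous g} -> {within A, continuous h} ->
  {within A, continuous (fun s => g s * h s)}.
Proof. by move=> cg ch t; apply: cvgM; [exact: cg | exact: ch]. Qed.

Lemma within_continuous_cst A (c : R) : {within A, continuous (fun _ : R => c)}.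
Proof. exact/continuous_subspaceT/cst_continuous. Qed.

Lemma within_continuous_sum A (I : Type) (r : seq I) (G : I -> R -> R) :
  (forall i, {within A, continuous (G i)}) ->
  {within A, continuous (fun s => \sum_(i <- r) G i s)}.
Proof.
move=> cG; elim: r => [|i r IH].
  under eq_fun do rewrite big_nil; exact: within_continuous_cst.
under eq_fun do rewrite big_cons; exact: within_continuousD.
Qed.

Lemma within_continuous_prod A (I : Type) (r : seq I) (G : I -> R -> R) :
  (forall i, {within A, continuous (G i)}) ->
  {within A, continuous (fun s => \prod_(i <- r) G i s)}.
Proof.
move=> cG; elim: r => [|i r IH].
  under eq_fun do rewrite big_nil; exact: within_continuous_cst.
under eq_fun do rewrite big_cons; exact: within_continuousM.
Qed.

Lemma derive_ge0_ndecr g (dg : R -> R) (a b : R) :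
  (forall t, a < t < b -> is_derive t 1 g (dg t)) -> (forall t, a < t < b -> 0 <= dg t) ->
  {within `[a, b], continuous g} ->
  forall s t, a <= s -> s <= t -> t <= b -> g s <= g t.
Proof.
move=> g_dg dg_ge0; apply: ger0_derive1_ndecr => t; rewrite in_itv /= => t_ab.
  by case: (g_dg t t_ab).
by rewrite derive1E; case: (g_dg t t_ab) => _ ->; exact: dg_ge0.
Qed.

Lemma derive_le0_nincr g (dg : R -> R) (a b : R) :
  (forall t, a < t < b -> is_derive t 1 g (dg t)) -> (forall t, a < t < b -> dg t <= 0) ->
  {within `[a, b], continuous g} ->
  forall s t, a <= s -> s <= t -> t <= b -> g t <= g s.
Proof.
move=> g_dg dg_le0 cg s t a_s st tb; rewrite -lerN2.
apply: (@derive_ge0_ndecr (fun u => - g u) (fun u => - dg u) a b) => // [u u_ab|u u_ab|u].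
- exact: is_deriveN (g_dg u u_ab).
- by rewrite oppr_ge0; exact: dg_le0.
- by apply: cvgN; exact: cg.
Qed.

(* (e^t g - k)' = e^t (g' + g - e^-t k') >= 0 *)
Lemma expR_comparison g (dg k dk : R -> R) (a b : R) :
  (forall t, a < t < b -> is_derive t 1 g (dg t)) ->
  (forall t : R, is_derive t 1 k (dk t)) ->
  (forall t, a < t < b -> expR (- t) * dk t - g t <= dg t) ->
  {within `[a, b], continuous g} ->
  forall s t, a <= s -> s <= t -> t <= b -> expR s * g s - k s <= expR t * g t - k t.
Proof.
move=> g_dg k_dk dg_ge cg.
apply: (@derive_ge0_ndecr _ (fun t => expR t * dg t + g t * expR t - dk t)) => [t t_ab|t t_ab|].
- exact: is_deriveB (is_deriveM (is_derive_expR t) (g_dg t t_ab)) (k_dk t).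
- have := ler_wpM2l (expR_ge0 t) (dg_ge t t_ab).
  by rewrite mulrBr mulrA expRxMexpNx_1 mul1r; lra.
- apply: within_continuousB; last by apply: derivable_within_continuous => t _; case: (k_dk t).
  by apply: within_continuousM => //; exact/continuous_subspaceT/continuous_expR.
Qed.

Lemma mul_sup_le (E : set R) b c : 0 <= c -> (forall y, E y -> 0 <= y) ->
  (forall y, E y -> b * y <= c) -> b * sup E <= c.
Proof.
move=> c_ge0 E_ge0 E_le.
have [supE|] := pselect (has_sup E); last by move=> ?; rewrite sup_out // mulr0.
have [y0 Ey0] := supE.1.
have sup_ge0 : 0 <= sup E by apply: le_trans (E_ge0 _ Ey0) (sup_upper_bound supE Ey0).
have [b_le0|b_gt0] := lerP b 0; first by apply: le_trans c_ge0; rewrite mulr_le0_ge0.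
rewrite mulrC -ler_pdivlMr //; apply: ge_sup; first by exists y0.
by move=> y Ey; rewrite ler_pdivlMr // mulrC; exact: E_le.
Qed.

End RealAnalysis.

Lemma within_continuous_multilinear_ext (R : realType) (T : finType) (A : set R)
    (h : {set T} -> R) (z : R -> T -> R) :
  (forall k, {within A, continuous (fun s => z s k)}) ->
  {within A, continuous (fun s => multilinear_ext h (z s))}.
Proof.
move=> z_cont; have -> : (fun s => multilinear_ext h (z s)) =
    (fun s => \sum_S pr_set (z s) S * h S).
  by apply/funext => s; rewrite multilinear_extE.
apply: within_continuous_sum => S /=; apply: within_continuousM; last exact: within_continuous_cst.
apply: within_continuous_prod => k /=; rewrite /pr_mem; case: (k \in S); first exact: z_cont.
by apply: within_continuousB; [exact: within_continuous_cst | exact: z_cont].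
Qed.

Section MeasuredContinuousGreedy.
Variables (R : realType) (T : finType) (p : R) (f : {set T} -> R) (P : set (T -> R)).
Variables (x v : R -> T -> R).
Hypothesis p01 : 0 <= p < 1.
Hypothesis P_cube : in_unit_cube P.
Hypothesis P_down : downward_closed P.
Hypothesis P_le_p : forall z i, P z -> z i <= p.
Hypothesis mcg : MCG_trajectory f P x v.

Let x0 : x 0 = (fun _ => 0). Proof. by case: mcg. Qed.

Let x_cont i : {within `[0, 1], continuous (fun s => x s i)}. Proof. by case: mcg. Qed.

Let v_in_P (t : R) : 0 < t < 1 -> P (v t).
Proof. by case: mcg => _ _ v_greedy _ /v_greedy[]. Qed.

Let v_greedy (t : R) : 0 < t < 1 -> forall w, P w ->
  mcg_objective f (x t) w <= mcg_objective f (x t) (v t).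
Proof. by case: mcg => _ _ v_greedy _ /v_greedy[]. Qed.

Let x_derive i (t : R) : 0 < t < 1 ->
  is_derive t 1 (fun s => x s i) (v t i * (1 - x t i)).
Proof. by case: mcg => _ _ _ x_derive /x_derive. Qed.

Let itv_ooW (t : R) : 0 < t < 1 -> 0 <= t <= 1.
Proof. by case/andP=> t_gt0 t_lt1; rewrite !ltW. Qed.

Lemma mcg_v_bounds (t : R) i : 0 < t < 1 -> 0 <= v t i <= p.
Proof.
by move=> t01; have Pv := v_in_P t01; have /andP[-> _] := P_cube Pv i; exact: P_le_p Pv.
Qed.

Section Coordinate.
Variable i : T.
Let y s := 1 - x s i.
Let q s := y s * expR s.

Let y0 : y 0 = 1. Proof. by rewrite /y x0 subr0. Qed.

Let y_cont : {within `[0, 1], continuous y}.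
Proof. by apply: within_continuousB; [exact: within_continuous_cst | exact: x_cont]. Qed.

Let y_derive (t : R) : 0 < t < 1 -> is_derive t 1 y (- (v t i * y t)).
Proof. by move=> t01; exact: is_derive_onem (@x_derive i _ t01). Qed.

Let q_derive (t : R) : 0 < t < 1 -> is_derive t 1 q ((1 - v t i) * q t).
Proof.
move=> t01; apply: is_derive_eq; first exact: is_deriveM (y_derive t01) (is_derive_expR t).
by rewrite /q /GRing.scale /=; ring.
Qed.

(* Squaring needs no sign information on [q]: (q^2)' = 2 (1 - v) q^2 >= 0. *)
Let sqr_q_ge1 (t : R) : 0 <= t <= 1 -> 1 <= q t * q t.
Proof.
case/andP=> t_ge0 t_le1.
suff : q 0 * q 0 <= q t * q t by rewrite /q y0 expR0 !mulr1.
apply: (@derive_ge0_ndecr _ (fun s => q s * q s)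
  (fun s => 2 * (1 - v s i) * (q s * q s)) 0 1) => // [s s01|s s01|].
- apply: is_derive_eq; first exact: is_deriveM (q_derive s01) (q_derive s01).
  by rewrite /GRing.scale /=; ring.
- have /andP[_ v_le_p] := mcg_v_bounds i s01; case/andP: p01 => _ p_lt1.
  have : 0 <= 1 - v s i by lra.
  by move=> ?; apply: mulr_ge0; [exact: mulr_ge0 | rewrite -expr2 sqr_ge0].
- have e_cont : {within `[0, 1], continuous (@expR R)}.
    exact/continuous_subspaceT/continuous_expR.
  by apply: within_continuousM; apply: within_continuousM.
Qed.

Lemma mcg_onem_gt0 (t : R) : 0 <= t <= 1 -> 0 < 1 - x t i.
Proof.
case/andP=> t_ge0 t_le1; rewrite -/(y t).
have y_neq0 s : 0 <= s <= 1 -> y s != 0.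
  by move=> s01; apply/eqP => ys0; have := sqr_q_ge1 s01; rewrite /q ys0 !mul0r; lra.
rewrite lt_neqAle eq_sym y_neq0 ?t_ge0 //=; rewrite leNgt; apply/negP => yt_lt0.
have [s] : exists2 s, s \in `[0, t] & y s = 0.
  apply: IVT => //; first apply: continuous_subspaceW y_cont => u /=.
    by rewrite !in_itv /= => /andP[-> /le_trans]; apply.
  by rewrite y0 ge_min le_max ler01 (ltW yt_lt0) orbT.
rewrite in_itv /= => /andP[s_ge0 s_le_t] /eqP; apply/negP/y_neq0.
by rewrite s_ge0 (le_trans s_le_t).
Qed.

Lemma mcg_x_ge0 (t : R) : 0 <= t <= 1 -> 0 <= x t i.
Proof.
case/andP=> t_ge0 t_le1.
suff : y t <= y 0 by rewrite y0 /y lerBlDr lerDl.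
apply: (@derive_le0_nincr _ y (fun s => - (v s i * y s)) 0 1) => // s s01.
have /andP[v_ge0 _] := mcg_v_bounds i s01.
by rewrite oppr_le0 mulr_ge0 ?(ltW (mcg_onem_gt0 (itv_ooW s01))).
Qed.

Lemma mcg_expRN_le_onem (t : R) : 0 <= t <= 1 -> expR (- t) <= 1 - x t i.
Proof.
move=> t01; have q_gt0 : 0 < q t by rewrite mulr_gt0 ?expR_gt0 ?mcg_onem_gt0.
have q_ge1 : 1 <= q t by have := sqr_q_ge1 t01; nra.
have := ler_wpM2r (expR_ge0 (- t)) q_ge1.
by rewrite mul1r /q -mulrA expRxMexpNx_1 mulr1.
Qed.

Lemma mcg_onem_linear_ge (t : R) : 0 <= t <= 1 -> 1 - p * t <= 1 - x t i.
Proof.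
case/andP=> t_ge0 t_le1.
suff : y 0 + p * 0 <= y t + p * t by rewrite y0 mulr0 addr0 -lerBlDr.
apply: (@derive_ge0_ndecr _ (fun s => y s + p * s) (fun s => - (v s i * y s) + p) 0 1) => //.
- move=> s s01; apply: is_derive_eq.
    exact: is_deriveD (y_derive s01) (is_deriveZ p (is_derive_id s 1)).
  by rewrite /GRing.scale /= mulr1.
- move=> s s01; have /andP[v_ge0 v_le_p] := mcg_v_bounds i s01.
  have y_le1 : y s <= 1 by rewrite /y lerBlDr lerDl mcg_x_ge0 ?itv_ooW.
  have : v s i * y s <= v s i by rewrite ler_piMr.
  lra.
- apply: within_continuousD y_cont _; apply/continuous_subspaceT => s.
  by apply: cvgM; [exact: cvg_cst | exact: cvg_id].
Qed.

End Coordinate.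

Lemma mcg_x_cube (t : R) k : 0 <= t <= 1 -> 0 <= x t k <= 1.
Proof.
by move=> t01; rewrite mcg_x_ge0 //= -subr_ge0 ltW ?mcg_onem_gt0.
Qed.

Lemma mcg_direction_in_P (t : R) : 0 < t < 1 -> P (fun k => v t k * (1 - x t k)).
Proof.
move=> t01; apply: P_down (v_in_P t01) => k.
have /andP[v_ge0 _] := mcg_v_bounds k t01.
have /andP[x_ge0 x_le1] := mcg_x_cube k (itv_ooW t01).
by rewrite mulr_ge0 ?subr_ge0 //= ler_piMr // lerBlDr lerDl.
Qed.

Lemma mcg_halfspace (c : T -> R) (d : R) : (forall w, P w -> \sum_k c k * w k <= d) ->
  forall b : R, 0 <= b <= 1 -> \sum_k c k * x b k <= b * d.
Proof.
move=> Pc b /andP[b_ge0 b_le1].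
have g0 : \sum_k c k * x 0 k - 0 * d = 0.
  by rewrite x0 mul0r subr0; apply: big1 => k _; rewrite mulr0.
rewrite -subr_le0 -[X in _ <= X]g0.
apply: (@derive_le0_nincr _ (fun s => \sum_k c k * x s k - s * d)
  (fun t => \sum_k c k * (v t k * (1 - x t k)) - d) 0 1) => // [t t01|t t01|].
- have d_sum : is_derive t 1 (fun s => \sum_k c k * x s k)
      (\sum_k c k * (v t k * (1 - x t k))).
    apply: (@is_derive_sum_seq _ _ _ (fun k s => c k * x s k)) => k.
    exact: is_deriveZ (@x_derive k _ t01).
  have d_lin := is_derive_mul (is_derive_id t 1) (is_derive_cst d t 1).
  apply: (is_derive_eq (is_deriveB d_sum d_lin)).
  by rewrite mulr0 add0r mulr1.
- by rewrite subr_le0; exact: Pc (mcg_direction_in_P t01).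
- apply: within_continuousB.
    apply: within_continuous_sum => k /=.
    by apply: within_continuousM; [exact: within_continuous_cst | exact: x_cont].
  apply/continuous_subspaceT => s.
  by apply: cvgM; [exact: cvg_id | exact: cvg_cst].
Qed.

Lemma mcg_scale_set (b : R) : polytope P -> 0 <= b <= 1 -> scale_set b P (x b).
Proof.
move=> [cs P_def] b01; have [->|b_neq0] := eqVneq b 0.
  have half01 : 0 < (2^-1 : R) < 1 by apply/andP; split; lra.
  by exists (v 2^-1); [exact: v_in_P | apply/funext => k; rewrite x0 mul0r].
have b_gt0 : 0 < b by rewrite lt_neqAle eq_sym b_neq0; case/andP: b01.
exists (fun k => x b k / b); last by apply/funext => k; rewrite mulrCA mulfV ?mulr1.
rewrite P_def => c c_cs /=; rewrite -(ler_pM2l b_gt0) mulr_sumr.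
under eq_bigr do rewrite mulrCA (mulrC b) divfK ?gt_eqF //.
by apply: mcg_halfspace => // w; rewrite P_def; apply.
Qed.

Section Value.
Hypothesis f_ge0 : forall S, 0 <= f S.
Hypothesis f_sub : submodular f.
Variables (z : T -> R) (a : {set T} -> R).
Hypothesis Pz : P z.
Hypothesis a_marg : marginal_dist z a.
Let opt := \sum_S a S * f S.
Let F s := multilinear_ext f (x s).

Let F_derive (t : R) : 0 < t < 1 -> is_derive t 1 F (mcg_objective f (x t) (v t)).
Proof.
move=> t01; apply: is_derive_eq.
  by apply: (is_derive_multilinear_ext f (z := x)) => k; exact: x_derive.
by apply: eq_bigr => k _; rewrite gradFE.
Qed.

Let F_cont : {within `[0, 1], continuous F}.
Proof. by apply: within_continuous_multilinear_ext => k; exact: x_cont. Qed.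

Let F0_ge0 : 0 <= F 0.
Proof. by rewrite /F x0 multilinear_ext0. Qed.

Let F_growth (t c : R) : 0 < t < 1 -> 0 <= c <= 1 -> (forall k, 0 <= x t k <= 1 - c) ->
  c * opt - F t <= mcg_objective f (x t) (v t).
Proof.
move=> t01 c01 x_le; apply: le_trans (v_greedy t01 Pz).
exact: mcg_objective_ge.
Qed.

Let F_comparison (k dk : R -> R) (s t : R) :
  (forall u : R, is_derive u 1 k (dk u)) ->
  (forall u, 0 < u < 1 -> expR (- u) * dk u - F u <= mcg_objective f (x u) (v u)) ->
  0 <= s -> s <= t -> t <= 1 -> expR s * F s - k s <= expR t * F t - k t.
Proof. by move=> k_dk dk_le; apply: (expR_comparison F_derive k_dk dk_le F_cont). Qed.

Let F_linear_comparison (t : R) : 0 <= t <= 1 -> t * opt <= expR t * F t.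
Proof.
case/andP=> t_ge0 t_le1.
have k_dk (u : R) : is_derive u 1 (fun s => s * opt) opt.
  apply: (is_derive_eq (is_derive_mul (is_derive_id u 1) (is_derive_cst opt u 1))).
  by rewrite mulr0 add0r -[RHS]mulr1.
have dk_le (u : R) : 0 < u < 1 -> expR (- u) * opt - F u <= mcg_objective f (x u) (v u).
  move=> u01; apply: F_growth => [//||k].
    by rewrite expR_ge0 expR_le1 oppr_le0 ltW //; case/andP: u01.
  have := mcg_expRN_le_onem k (itv_ooW u01); have := mcg_x_cube k (itv_ooW u01).
  by case/andP=> -> _ /=; rewrite lerBrDr addrC -lerBrDr.
have := F_comparison k_dk dk_le (lexx 0) t_ge0 t_le1.
rewrite expR0 mul1r mul0r subr0; have := F0_ge0; lra.
Qed.

Let F_exp_comparison (s t : R) : 0 <= s -> s <= t -> t <= 1 ->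
  expR s * F s - (1 - p) * expR s * opt <= expR t * F t - (1 - p) * expR t * opt.
Proof.
have k_dk (u : R) : is_derive u 1 (fun s => (1 - p) * expR s * opt) ((1 - p) * expR u * opt).
  have d_exp := is_deriveZ (1 - p) (is_derive_expR u).
  apply: (is_derive_eq (is_derive_mul d_exp (is_derive_cst opt u 1))).
  by rewrite mulr0 add0r [RHS]mulrC.
apply: F_comparison k_dk _ => u u01.
have -> : expR (- u) * ((1 - p) * expR u * opt) = (1 - p) * opt.
  by rewrite expRN; field; rewrite gt_eqF ?expR_gt0.
apply: F_growth => [//||k].
  by case/andP: p01 => p_ge0 p_lt1; rewrite subr_ge0 ltW //= lerBlDr lerDl.
have := mcg_onem_linear_ge k (itv_ooW u01); have := mcg_x_cube k (itv_ooW u01).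
case/andP=> -> _ /=; case/andP: p01 => p_ge0 _; case/andP: u01 => u_gt0 u_lt1.
have : p * u <= p by rewrite ler_piMr // ltW.
lra.
Qed.

Lemma mcg_value_early (b : R) : 0 <= b <= 1 ->
  b * expR (- b) * \sum_S a S * f S <= multilinear_ext f (x b).
Proof.
move=> b01; have := ler_wpM2l (expR_ge0 (- b)) (F_linear_comparison b01).
have : expR b * expR (- b) * F b = F b by rewrite expRxMexpNx_1 mul1r.
rewrite -/opt -/(F b); lra.
Qed.

Lemma mcg_value_late (b : R) : 0 <= b <= 1 -> ln ((1 - p)^-1) <= b ->
  (1 - p - expR (- b) * (1 + ln (1 - p))) * \sum_S a S * f S <= multilinear_ext f (x b).
Proof.
case/andP=> b_ge0 b_le1 L_le_b; case/andP: p01 => p_ge0 p_lt1.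
have onem_p_gt0 : 0 < 1 - p by rewrite subr_gt0.
set L := ln ((1 - p)^-1).
have L_ge0 : 0 <= L by rewrite ln_ge0 // invf_ge1 // lerBlDr lerDl.
have expL : (1 - p) * expR L = 1 by rewrite lnK ?posrE ?invr_gt0 // mulfV ?gt_eqF.
have lnL : ln (1 - p) = - L by rewrite /L lnV ?opprK // posrE.
have L01 : 0 <= L <= 1 by rewrite L_ge0 (le_trans L_le_b b_le1).
have early := F_linear_comparison L01.
have late := F_exp_comparison L_ge0 L_le_b b_le1; rewrite expL mul1r in late.
rewrite -(ler_pM2l (expR_gt0 b)) -/opt -/(F b).
have -> : expR b * ((1 - p - expR (- b) * (1 + ln (1 - p))) * opt) =
    (1 - p) * expR b * opt - (1 - L) * opt.
  by rewrite lnL expRN; field; rewrite gt_eqF ?expR_gt0.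
lra.
Qed.

End Value.

End MeasuredContinuousGreedy.

Lemma concave_closure_le (R : realType) (T : finType) (f : {set T} -> R) (z : T -> R)
    (b c : R) :
  (forall S, 0 <= f S) -> 0 <= c ->
  (forall a, marginal_dist z a -> b * (\sum_S a S * f S) <= c) ->
  b * concave_closure f z <= c.
Proof.
move=> f_ge0 c_ge0 bound; apply: mul_sup_le => // _ [a [a_ge0 a_sum1 a_marg ->]].
  by apply: sumr_ge0 => S _; exact: mulr_ge0.
exact: bound.
Qed.

Theorem theorem3 (R : realType) (T : finType) (p : R)
    (f : {set T} -> R) (P : set (T -> R)) (x v : R -> T -> R) :
  0 <= p < 1 ->
  nonneg_setfun f -> submodular f ->
  polytope P -> in_unit_cube P -> downward_closed P ->
  (forall z i, P z -> z i <= p) ->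
  MCG_trajectory f P x v ->
  forall b : R, 0 <= b <= 1 ->
    scale_set b P (x b) /\
    (forall zstar : T -> R, P zstar ->
      (forall z, P z -> concave_closure f z <= concave_closure f zstar) ->
      (b <= ln ((1 - p)^-1) ->
         multilinear_ext f (x b) >= b * expR (- b) * concave_closure f zstar) /\
      (ln ((1 - p)^-1) <= b ->
         multilinear_ext f (x b) >=
           (1 - p - expR (- b) * (1 + ln (1 - p))) * concave_closure f zstar)).
Proof.
move=> p01 [f_ge0 _] f_sub P_poly P_cube P_down P_le_p mcg b b01.
split; first exact: (mcg_scale_set p01 P_cube P_down P_le_p mcg P_poly b01).
move=> zstar Pz _.
have Fb_ge0 : 0 <= multilinear_ext f (x b).
  by apply: multilinear_ext_ge0 => // k; exact: (mcg_x_cube p01 P_cube P_le_p mcg k b01).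
split=> [_|b_late]; apply: concave_closure_le => // a a_marg.
  exact: (mcg_value_early p01 P_cube P_le_p mcg f_ge0 f_sub Pz a_marg b01).
exact: (mcg_value_late p01 P_cube P_le_p mcg f_ge0 f_sub Pz a_marg b01 b_late).
Qed.
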